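(* Let $\mathcal I$ and $\mathcal J$ be ideals on $\omega$ and let $X$ be a normal space. (1) If $\mathcal I\neq\mathcal J$, then $\mathrm{non}(\mathcal I\text{-p},\mathcal J\text{-u})=\mathrm{non}(\mathcal I\text{-qn},\mathcal J\text{-u})=\mathrm{non}(\mathcal I\text{-}\sigma\text{-u},\mathcal J\text{-u})=1$. (2) $X\in(\mathcal I\text{-p},\mathcal I\text{-u})\iff X\in(\mathcal I\text{-qn},\mathcal I\text{-u})\iff X\in(\mathcal I\text{-}\sigma\text{-u},\mathcal I\text{-u})\iff |X|<\omega$. (3) $\mathrm{non}(\mathcal I\text{-p},\mathcal I\text{-u})=\mathrm{non}(\mathcal I\text{-qn},\mathcal I\text{-u})=\mathrm{non}(\mathcal I\text{-}\sigma\text{-u},\mathcal I\text{-u})=\omega$. (4) There is no infinite normal space in any of the classes $(\mathcal I\text{-p},\mathcal I\text{-u})$, $(\mathcal I\text{-qn},\mathcal I\text{-u})$, $(\mathcal I\text{-}\sigma\text{-u},\mathcal I\text{-u})$.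
   Context: An ideal on $\omega$ is a family $\mathcal I\subseteq\mathcal P(\omega)$ closed under finite unions and subsets, containing all finite sets, with $\omega\notin\mathcal I$. For an ideal $\mathcal I$ on $\omega$, a real sequence $(a_n)$ is $\mathcal I$-convergent to $0$ if $\{n:|a_n|\ge\varepsilon\}\in\mathcal I$ for every $\varepsilon>0$. For a sequence $(f_n)$ of real-valued functions on a set $X$: $(f_n)$ is $\mathcal I$-pointwise convergent to $0$ (written $\mathcal I$-p) if $(f_n(x))$ is $\mathcal I$-convergent to $0$ for every $x\in X$; $\mathcal I$-uniformly convergent to $0$ ($\mathcal I$-u) if $\{n:\exists x\in X\,(|f_n(x)|\ge\varepsilon)\}\in\mathcal I$ for every $\varepsilon>0$; $\mathcal I$-$\sigma$-uniformly convergent to $0$ ($\mathcal I$-$\sigma$-u) if there are sets $X_k$ ($k\in\omega$) with $\bigcup_k X_k=X$ such that $(f_n\restriction X_k)$ is $\mathcal I$-uniformly convergent to $0$ for every $k$; $\mathcal I$-quasi-normally convergent to $0$ ($\mathcal I$-qn) if there is a sequence $(\varepsilon_n)$ of positive reals $\mathcal I$-convergent to $0$ such that $\{n:|f_n(x)|\ge\varepsilon_n\}\in\mathcal I$ for every $x\in X$. $\mathcal C(X)$ denotes the set of continuous real-valued functions on a space $X$. A normal space is a Hausdorff space in which any two disjoint closed sets have disjoint open neighbourhoods. For two convergence notions $\alpha,\beta$ from the list above (possibly with different ideals), $(\alpha,\beta)$ is the class of all normal spaces $X$ such that for every sequence $(f_n)$ in $\mathcal C(X)$, $(f_n)$ converges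 to $0$ in sense $\alpha$ iff it converges to $0$ in sense $\beta$; $\mathrm{non}(\alpha,\beta)$ is the least cardinality of a normal space not in $(\alpha,\beta)$ (and $\infty$ if there is none). *)

From HB Require Import structures.
From mathcomp Require Import all_boot all_order all_algebra.
From mathcomp Require Import all_classical all_reals all_analysis.
Set Implicit Arguments. Unset Strict Implicit. Unset Printing Implicit Defensive.
Import Order.TTheory GRing.Theory Num.Theory.
Import numFieldNormedType.Exports.
Local Open Scope classical_set_scope.
Local Open Scope ring_scope.

Definition is_ideal (I : set (set nat)) : Prop :=
  (forall A B, I A -> I B -> I (A `|` B)) /\
  (forall A B, B `<=` A -> I A -> I B) /\
  (forall A, finite_set A -> I A) /\
  ~ I [set: nat].

Section conv.
Variable R : realType.

Definition Iconv (I : set (set nat)) (a : nat -> R) : Prop :=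
  forall eps : R, 0 < eps -> I [set n | eps <= `|a n|].

Definition conv_notion := forall T : topologicalType, (nat -> T -> R) -> Prop.

Definition Ip (I : set (set nat)) : conv_notion :=
  fun T f => forall x : T, Iconv I (fun n => f n x).

Definition Iu_on (I : set (set nat)) (T : Type) (A : set T) (f : nat -> T -> R) :=
  forall eps : R, 0 < eps -> I [set n | exists2 x, A x & eps <= `|f n x|].

Definition Iu (I : set (set nat)) : conv_notion :=
  fun T f => Iu_on I [set: T] f.

Definition Isu (I : set (set nat)) : conv_notion :=
  fun T f => exists Xk : nat -> set T,
    \bigcup_k Xk k = [set: T] /\ forall k, Iu_on I (Xk k) f.

Definition Iqn (I : set (set nat)) : conv_notion :=
  fun T f => exists e : nat -> R,
    (forall n, 0 < e n) /\ Iconv I e /\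
    forall x : T, I [set n | e n <= `|f n x|].

Definition in_class (alpha beta : conv_notion) (T : topologicalType) : Prop :=
  forall f : nat -> T -> R, (forall n, continuous (f n)) ->
    (alpha T f <-> beta T f).

End conv.

Definition normal_sp (T : topologicalType) : Prop :=
  hausdorff_space T /\
  forall A B : set T, closed A -> closed B -> A `&` B = set0 ->
    exists U V : set T, [/\ open U, open V, A `<=` U, B `<=` V & U `&` V = set0].

(* non(alpha,beta) equals the cardinality of the type K: some normal space not
   in the class has cardinality |K|, and every normal space not in the class has
   cardinality at least |K| *)
Definition non_is (R : realType) (alpha beta : conv_notion R) (K : Type) : Prop :=
  (exists T : topologicalType, normal_sp T /\ ~ in_class alpha beta T /\
     ([set: T] #= [set: K])%card) /\
  (forall T : topologicalType, normal_sp T -> ~ in_class alpha beta T ->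
     ([set: K] #<= [set: T])%card).

(* On a finite space, I-pointwise convergence of (f_n) makes the single
   sequence s_n = sum_x |f_n x| I-convergent to 0, and s_n dominates f_n;
   this gives I-uniform convergence, and I-quasi-normal convergence with
   control sequence |s_n| + 1/(n+1).  An infinite Hausdorff space contains
   pairwise disjoint nonempty open sets O_n, and in a normal space Urysohn's
   lemma gives continuous f_n vanishing off O_n with f_n(x_n) = 1.  At each
   point f_n is eventually 0, so (f_n) is I-p, I-qn and I-sigma-u convergent,
   but sup |f_n| = 1 for all n, so it is not I-uniformly convergent.
   If I <> J, a set A lying in exactly one of the ideals separates them: on a
   one-point space the constant functions 1_A(n) are I-convergent but not
   J-convergent, or vice versa, while the empty space is in every class. *)

From HB Require Import structures.
From mathcomp Require Import all_boot all_order all_algebra.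
From mathcomp Require Import all_classical all_reals all_analysis.
Set Implicit Arguments. Unset Strict Implicit. Unset Printing Implicit Defensive.
Import Order.TTheory GRing.Theory Num.Theory.
Import numFieldNormedType.Exports.
Local Open Scope classical_set_scope.
Local Open Scope ring_scope.

Section ideal.
Variable I : set (set nat).
Hypothesis hI : is_ideal I.

Lemma idealU A B : I A -> I B -> I (A `|` B).
Proof. by case: hI => + _; apply. Qed.

Lemma idealS A B : B `<=` A -> I A -> I B.
Proof. by case: hI => _ [+ _]; apply. Qed.

Lemma ideal_finite A : finite_set A -> I A.
Proof. by case: hI => _ [_ [+ _]]; apply. Qed.

Lemma idealNT : ~ I [set: nat].
Proof. by case: hI => _ [_ [_]]. Qed.

Lemma ideal_eventually_not (P : nat -> Prop) :
  (\forall n \near \oo, ~ P n) -> I [set n | P n].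
Proof.
move=> [k _ kP]; apply: ideal_finite.
apply: sub_finite_set (finite_II k) => n /= Pn.
by rewrite ltnNge; apply/negP => /kP.
Qed.

Section real_sequences.
Variable R : realType.

Lemma cvg0_Iconv (a : nat -> R) : a @ \oo --> 0 -> Iconv I a.
Proof.
move=> a0 eps e0; apply: ideal_eventually_not.
apply: filterS (cvgr0_norm_lt _ a0 _ e0) => n /=.
by rewrite ltNge => /negP.
Qed.

Lemma Iconv_harmonic : Iconv I (@harmonic R).
Proof. exact/cvg0_Iconv/cvg_harmonic. Qed.

Lemma Iconv_norm (a : nat -> R) : Iconv I a -> Iconv I (fun n => `|a n|).
Proof. by move=> ha eps /ha; apply: idealS => n /=; rewrite normr_id. Qed.

Lemma IconvD (a b : nat -> R) : Iconv I a -> Iconv I b -> Iconv I (a \+ b).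
Proof.
move=> ha hb eps e0; have e2 : 0 < eps / 2 by rewrite divr_gt0.
apply: idealS (idealU (ha _ e2) (hb _ e2)) => n /= abn.
have [|an] := leP (eps / 2) `|a n|; first by left.
right; rewrite leNgt; apply/negP => bn.
by move: (le_lt_trans (ler_normD _ _) (ltrD an bn)); rewrite -splitr ltNge abn.
Qed.

Lemma Iconv_sum (T : Type) (s : seq T) (a : T -> nat -> R) :
  (forall x, Iconv I (a x)) -> Iconv I (fun n => \sum_(x <- s) a x n).
Proof.
move=> ha; elim: s => [|x s IH] eps e0.
  by apply: ideal_finite; apply: sub_finite_set (finite_set0 nat) => n /=;
    rewrite big_nil normr0 leNgt e0.
by move: (IconvD (ha x) IH e0); apply: idealS => n /=; rewrite big_cons.
Qed.

End real_sequences.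

Section convergence_notions.
Variables (R : realType) (T : topologicalType).
Implicit Type f : nat -> T -> R.

Lemma Iu_Ip f : Iu I f -> Ip I f.
Proof. by move=> fu x eps /fu; apply: idealS => n /= fx; exists x. Qed.

Lemma Iu_Isu f : Iu I f -> Isu I f.
Proof. by exists (fun=> [set: T]); split => //; rewrite bigcup_const. Qed.

Lemma Isu_Ip f : Isu I f -> Ip I f.
Proof.
move=> [X [XT Xu]] x eps e0.
have [k _ Xkx] : (\bigcup_k X k) x by rewrite XT.
by apply: idealS (Xu k eps e0) => n /= fx; exists x.
Qed.

Lemma Iqn_Ip f : Iqn I f -> Ip I f.
Proof.
move=> [e [e_gt0 [eI fe]]] x eps e0.
apply: idealS (idealU (fe x) (eI eps e0)) => n /= fx.
have [|fe_lt] := leP (e n) `|f n x|; first by left.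
by right; rewrite gtr0_norm ?e_gt0 // (le_trans fx (ltW fe_lt)).
Qed.

Lemma dominated_Iu f (s : nat -> R) :
  (forall n x, `|f n x| <= s n) -> Iconv I s -> Iu I f.
Proof.
move=> fs sI eps /sI; apply: idealS => n /= [x _ fx].
exact: le_trans fx (le_trans (fs n x) (ler_norm _)).
Qed.

Lemma dominated_Iqn f (s : nat -> R) :
  (forall n x, `|f n x| <= s n) -> Iconv I s -> Iqn I f.
Proof.
move=> fs sI; exists (fun n => `|s n| + harmonic n); split; [|split].
- by move=> n; rewrite ltr_wpDl ?harmonic_gt0.
- exact: (IconvD (Iconv_norm sI) (@Iconv_harmonic R)).
- move=> x; apply: ideal_finite; apply: sub_finite_set (finite_set0 nat) => n /=.
  rewrite leNgt => /negP; apply; apply: le_lt_trans (fs n x) _.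
  by rewrite (le_lt_trans (ler_norm _)) // ltrDl harmonic_gt0.
Qed.

Lemma finite_Ip_dominated f : finite_set [set: T] -> Ip I f ->
  exists2 s : nat -> R, (forall n x, `|f n x| <= s n) & Iconv I s.
Proof.
move=> /finite_seqP[e Te] fp; exists (fun n => \sum_(x <- e) `|f n x|).
  move=> n x; have xe : x \in e by have : [set: T] x by []; rewrite Te.
  by rewrite (big_rem x xe) /= lerDl sumr_ge0.
by apply: Iconv_sum => x; apply: Iconv_norm.
Qed.

Lemma finite_Ip_Iu f : finite_set [set: T] -> Ip I f -> Iu I f.
Proof. by move=> fT /(finite_Ip_dominated fT)[s]; apply: dominated_Iu. Qed.

Lemma finite_Ip_Iqn f : finite_set [set: T] -> Ip I f -> Iqn I f.
Proof. by move=> fT /(finite_Ip_dominated fT)[s]; apply: dominated_Iqn. Qed.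

Lemma eventually_zero_Ip f :
  (forall x, \forall n \near \oo, f n x = 0) -> Ip I f.
Proof.
move=> f0 x eps e0; apply: ideal_eventually_not.
by apply: filterS (f0 x) => n ->; rewrite normr0 leNgt e0.
Qed.

Lemma eventually_zero_Iqn f :
  (forall x, \forall n \near \oo, f n x = 0) -> Iqn I f.
Proof.
move=> f0; exists harmonic; split; [|split].
- exact: harmonic_gt0.
- exact: Iconv_harmonic.
- move=> x; apply: ideal_eventually_not.
  by apply: filterS (f0 x) => n ->; rewrite normr0 leNgt harmonic_gt0.
Qed.

Lemma eventually_zero_Isu f :
  (forall x, \forall n \near \oo, f n x = 0) -> Isu I f.
Proof.
move=> f0; exists (fun k => [set x | forall n, (k <= n)%N -> f n x = 0]); split.
  apply/seteqP; split => // x _; have [k _ kf] := f0 x.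
  by exists k => // n; apply: kf.
move=> k eps e0; apply: ideal_finite; apply: sub_finite_set (finite_II k).
move=> n /= [x xk fx]; rewrite ltnNge; apply/negP => /xk fn0.
by move: fx; rewrite fn0 normr0 leNgt e0.
Qed.

End convergence_notions.
End ideal.

Lemma open_disjoint_closure (T : topologicalType) (U V : set T) :
  open V -> V `&` U = set0 -> V `&` closure U = set0.
Proof.
move=> oV /disjoints_subset VU; apply/disjoints_subset.
by rewrite -interiorC -(open_subsetE _ oV).
Qed.

Section hausdorff_infinite.
Variable T : topologicalType.
Hypothesis hT : hausdorff_space T.

Lemma open_infinite_split (W : set T) : open W -> infinite_set W ->
  exists O, [/\ open O, O !=set0, O `<=` W & infinite_set (W `\` closure O)].
Proof.
move=> oW iW; have [x Wx] := infinite_setN0 iW.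
have [y [Wy /eqP yx]] := infinite_setN0 (infinite_setD iW (finite_set1 x)).
move: hT; rewrite open_hausdorff => /(_ y x yx) [[U V] /=].
rewrite !inE => -[Uy Vx] [oU oV UV].
have oUW : open (U `&` W) by exact: openI.
have oVW : open (V `&` W) by exact: openI.
have [fU|iU] := pselect (finite_set (W `\` closure (U `&` W))); last first.
  by exists (U `&` W); split => //; exists y.
exists (V `&` W); split => //; first by exists x.
have UW_sub : U `&` W `<=` W `\` closure (V `&` W).
  have /disjoints_subset UW_clV : U `&` W `&` closure (V `&` W) = set0.
    by apply: open_disjoint_closure => //; rewrite setIACA UV set0I.
  by move=> z UWz; split; [case: UWz | exact: UW_clV].
(* Were [U `&` W] finite, it would be closed and W would be finite. *)
suff : infinite_set (U `&` W) by exact: sub_infinite_set UW_sub.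
move=> fUW; rewrite -(closure_id _).1 in fU; last first.
  exact: (accessible_finite_set_closed.1 (hausdorff_accessible hT)).
have fWUW : finite_set ((W `\` (U `&` W)) `|` (U `&` W)) by rewrite finite_setU.
apply: iW; apply: sub_finite_set fWUW => z Wz.
by have [|nUWz] := pselect ((U `&` W) z); [right|left].
Qed.

Lemma hausdorff_infinite_disjoint_opens : infinite_set [set: T] ->
  exists O : nat -> set T,
    [/\ forall n, open (O n), forall n, O n !=set0 & trivIset [set: nat] O].
Proof.
move=> iT.
have /choice[g gP] : forall W : set T, exists O : set T,
    open W -> infinite_set W ->
    [/\ open O, O !=set0, O `<=` W & infinite_set (W `\` closure O)].
  move=> W; have [[oW iW]|WP] := pselect (open W /\ infinite_set W).
    by have [V VP] := open_infinite_split oW iW; exists V.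
  by exists set0 => oW iW; exfalso; exact: WP.
pose Ws n := iter n (fun W => W `\` closure (g W)) [set: T].
have WsP n : open (Ws n) /\ infinite_set (Ws n).
  elim: n => [|n [oW iW]]; first by split; [exact: openT|].
  have [_ _ _ iD] := gP _ oW iW; split => //=.
  by rewrite setDE; apply: openI => //; rewrite openC; exact: closed_closure.
have Ws_decr m n : (m <= n)%N -> Ws n `<=` Ws m.
  by move=> /subnK <-; elim: (n - m)%N => //= k IH z [/IH].
exists (g \o Ws); split => [n|n|].
- by have [oW iW] := WsP n; have [] := gP _ oW iW.
- by have [oW iW] := WsP n; have [] := gP _ oW iW.
apply: ltn_trivIset => n m mn; apply/seteqP; split => // z /= [gm gn].
have Wnz : Ws n z by have [oW iW] := WsP n; have [_ _ + _] := gP _ oW iW; apply.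
have [_] := Ws_decr _ _ mn _ Wnz; apply; exact: subset_closure.
Qed.

End hausdorff_infinite.

Lemma accessible_normal_bump (R : realType) (T : topologicalType)
    (O : set T) (x : T) :
  normal_space T -> accessible_space T -> open O -> O x ->
  exists g : T -> R, [/\ continuous g, g x = 1 & forall z, ~ O z -> g z = 0].
Proof.
move=> /(@normal_separatorP R T) sep /accessible_closed_set1 cl1 oO Ox.
have OC_closed : closed (~` O) by exact: open_closedC.
have OCx : ~` O `&` [set x] = set0.
  by rewrite setIC; apply/disjoints_subset => _ ->; rewrite setCK.
have /(@uniform_separatorP T R)[g [gc _ g0 g1]] := sep _ _ OC_closed (cl1 x) OCx.
exists g; split => //; first by apply: g1; exists x.
by move=> z Oz; apply: g0; exists z.
Qed.

Lemma normal_infinite_bumps (R : realType) (T : topologicalType) :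
  normal_sp T -> infinite_set [set: T] ->
  exists f : nat -> T -> R, [/\ forall n, continuous (f n),
    forall z, \forall n \near \oo, f n z = 0 & forall n, exists x, f n x = 1].
Proof.
move=> [hT /(@normal_openP R T) nT] iT.
have [U [oU /choice[x Ux] Utriv]] := hausdorff_infinite_disjoint_opens hT iT.
have /choice[f fP] : forall n, exists g : T -> R,
    [/\ continuous g, g (x n) = 1 & forall z, ~ U n z -> g z = 0].
  by move=> n; apply: accessible_normal_bump => //; exact: hausdorff_accessible.
exists f; split => [n|z|n]; first by have [] := fP n.
- have [[n Unz]|nU] := pselect (exists n, U n z); last first.
    by exists 0%N => // m _; have [_ _ ->] // := fP m => Umz; apply: nU; exists m.
  exists n.+1 => // m /= nm; have [_ _ ->] // := fP m => Umz.
  by move: nm; rewrite (Utriv n m) ?ltnn //; exists z.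
- by exists (x n); have [] := fP n.
Qed.

Lemma discrete_normal_sp (T : discreteTopologicalType) : normal_sp T.
Proof.
split; first exact: discrete_hausdorff.
by move=> A B _ _ AB; exists A, B; split => //; exact: discrete_open.
Qed.

Lemma card_unit_le (T : Type) (x0 : T) : ([set: unit] #<= [set: T])%card.
Proof.
have -> : [set: unit] = (fun=> tt) @` [set: T].
  by apply/seteqP; split => // -[] _; exists x0.
exact: card_image_le.
Qed.

Section Ip_like.
Variables (R : realType) (I : set (set nat)).

Definition Ip_like (alpha : conv_notion R) : Prop := [/\
  forall (T : topologicalType) (f : nat -> T -> R), alpha T f -> Ip I f,
  forall (T : topologicalType) (f : nat -> T -> R),
    finite_set [set: T] -> Ip I f -> alpha T f &
  forall (T : topologicalType) (f : nat -> T -> R),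
    (forall x, \forall n \near \oo, f n x = 0) -> alpha T f].

Hypothesis hI : is_ideal I.

Lemma Ip_like_Ip : Ip_like (@Ip R I).
Proof. by split => // T f; exact: eventually_zero_Ip. Qed.

Lemma Ip_like_Iqn : Ip_like (@Iqn R I).
Proof.
split => T f; [exact: Iqn_Ip | exact: finite_Ip_Iqn |].
exact: eventually_zero_Iqn.
Qed.

Lemma Ip_like_Isu : Ip_like (@Isu R I).
Proof.
split => T f; [exact: Isu_Ip | | exact: eventually_zero_Isu].
by move=> fT /(finite_Ip_Iu hI fT); exact: Iu_Isu.
Qed.

Section classes.
Variable alpha : conv_notion R.
Hypothesis halpha : Ip_like alpha.

Lemma in_class_finite (T : topologicalType) :
  finite_set [set: T] -> in_class alpha (@Iu R I) T.
Proof.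
have [alpha_Ip Ip_alpha _] := halpha.
move=> fT f _; split => [/alpha_Ip|/(Iu_Ip hI)]; first exact: finite_Ip_Iu.
exact: Ip_alpha.
Qed.

Lemma not_in_class_bumps (T : topologicalType) (f : nat -> T -> R) :
  (forall n, continuous (f n)) -> (forall x, \forall n \near \oo, f n x = 0) ->
  (forall n, exists x, f n x = 1) -> ~ in_class alpha (@Iu R I) T.
Proof.
have [_ _ zero_alpha] := halpha.
move=> fc f0 f1 /(_ f fc)[/(_ (zero_alpha _ _ f0)) fu _].
apply: (idealNT hI); apply: (idealS hI) (fu 1 ltr01) => n _.
by have [x fx] := f1 n; exists x; rewrite ?fx ?normr1.
Qed.

Lemma not_in_class_infinite (T : topologicalType) :
  normal_sp T -> infinite_set [set: T] -> ~ in_class alpha (@Iu R I) T.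
Proof.
move=> nT /(normal_infinite_bumps R nT)[f [fc f0 f1]].
exact: not_in_class_bumps f0 f1.
Qed.

Lemma in_class_iff_finite (T : topologicalType) :
  normal_sp T -> in_class alpha (@Iu R I) T <-> finite_set [set: T].
Proof.
move=> nT; split; last exact: in_class_finite.
by move=> inT; apply: contrapT => /(not_in_class_infinite nT).
Qed.

Lemma non_is_nat : non_is alpha (@Iu R I) nat.
Proof.
split.
  exists nat; split; [exact: discrete_normal_sp|split; last exact: card_eqxx].
  exact: not_in_class_infinite (discrete_normal_sp nat) infinite_nat.
by move=> T _ nin; apply/infiniteP => fT; apply: nin; exact: in_class_finite.
Qed.

Variable J : set (set nat).
Hypothesis hJ : is_ideal J.

Lemma in_class_empty (T : topologicalType) :
  (T -> False) -> in_class alpha (@Iu R J) T.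
Proof.
have [_ Ip_alpha _] := halpha.
move=> T0 f _; split=> _.
  move=> eps _; apply: (ideal_finite hJ); apply: sub_finite_set (finite_set0 nat).
  by move=> n [x]; case: (T0 x).
apply: Ip_alpha => [|x]; last by case: (T0 x).
by apply: sub_finite_set (finite_set0 T) => x; case: (T0 x).
Qed.

Lemma not_in_class_ideal_neq (T : topologicalType) (x0 : T) :
  finite_set [set: T] -> I <> J -> ~ in_class alpha (@Iu R J) T.
Proof.
have [alpha_Ip Ip_alpha _] := halpha.
move=> fT IJ; have [A IJA] : exists A, ~ (I A <-> J A).
  apply: contra_notP IJ => IJ; apply/funext => A; apply/propext.
  by apply: contra_notP IJ => IJA; exists A.
pose f n (_ : T) : R := \1_A n.
have fc n : continuous (f n) by exact: cst_continuous.
have f_ge eps n x : 0 < eps -> eps <= `|f n x| -> A n.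
  move=> e0; rewrite /f indicE; have [/set_mem //|_] := boolP (n \in A).
  by rewrite normr0 leNgt e0.
have f_1 n x : A n -> 1 <= `|f n x|.
  by move=> An; rewrite /f indicE mem_set ?normr1.
move=> /(_ f fc)[alpha_Iu Iu_alpha]; have [IA|nIA] := pselect (I A).
  have fp : Ip I f by move=> x eps e0; apply: (idealS hI) IA => n; exact: f_ge.
  apply: IJA; split => // _.
  apply: (idealS hJ) (alpha_Iu (Ip_alpha _ _ fT fp) 1 ltr01) => n An.
  by exists x0 => //; exact: f_1.
have JA : J A by apply: contrapT => nJA; apply: IJA.
have fu : Iu J f by move=> eps e0; apply: (idealS hJ) JA => n [x _]; exact: f_ge.
apply: nIA; apply: (idealS hI) (alpha_Ip _ _ (Iu_alpha fu) x0 1 ltr01) => n.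
exact: f_1.
Qed.

Lemma non_is_unit : I <> J -> non_is alpha (@Iu R J) unit.
Proof.
move=> IJ; split.
  exists (discrete_topology unit).
  split; [exact: discrete_normal_sp|split; last exact: card_eqxx].
  apply: (not_in_class_ideal_neq (tt : discrete_topology unit)) IJ.
  by apply: sub_finite_set (finite_set1 tt) => -[].
move=> T _ nin; have [[x0 _]|T0] := pselect ([set: T] !=set0).
  exact: card_unit_le x0.
by exfalso; apply: nin; apply: in_class_empty => x; apply: T0; exists x.
Qed.

End classes.
End Ip_like.

Theorem corollary3p5 (R : realType) (I J : set (set nat))
  (hI : is_ideal I) (hJ : is_ideal J) (X : topologicalType) (hX : normal_sp X) :
  (* (1) *)
  (I <> J ->
     non_is (@Ip R I) (@Iu R J) unit /\ non_is (@Iqn R I) (@Iu R J) unit /\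
     non_is (@Isu R I) (@Iu R J) unit) /\
  (* (2) *)
  ((in_class (@Ip R I) (@Iu R I) X <-> in_class (@Iqn R I) (@Iu R I) X) /\
   (in_class (@Iqn R I) (@Iu R I) X <-> in_class (@Isu R I) (@Iu R I) X) /\
   (in_class (@Isu R I) (@Iu R I) X <-> finite_set [set: X])) /\
  (* (3) *)
  (non_is (@Ip R I) (@Iu R I) nat /\ non_is (@Iqn R I) (@Iu R I) nat /\
   non_is (@Isu R I) (@Iu R I) nat) /\
  (* (4) *)
  (forall Y : topologicalType, normal_sp Y -> infinite_set [set: Y] ->
     ~ in_class (@Ip R I) (@Iu R I) Y /\ ~ in_class (@Iqn R I) (@Iu R I) Y /\
     ~ in_class (@Isu R I) (@Iu R I) Y).
Proof.
have hp := Ip_like_Ip R hI; have hqn := Ip_like_Iqn R hI.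
have hsu := Ip_like_Isu R hI.
split; [|split; [|split]].
- by move=> IJ; split; [|split]; apply: (non_is_unit hI) hJ IJ.
- by rewrite !(in_class_iff_finite hI _ hX).
- by split; [|split]; apply: non_is_nat.
- by move=> Y hY iY; split; [|split]; apply: not_in_class_infinite.
Qed.
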